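(* Let $G=(V,E,p,(V_{E},V_{O}))$ be a parity game, let $D\subseteq V$ be an Odd-dominion of $G$, and let $k$ be an odd number such that $p(w)\ge k$ for all $w\in D$. Let $v\in D$ with $p(v)=k$, and let $\sigma_D$ be a strategy of Odd that is winning for Odd on $D$ and closed on $D$. Let $A=\mathrm{Attr}^{\ge k}_{O}(\{v\})$ and let $\sigma_{Attr}$ be the strategy of Odd defined on $(A\setminus\{v\})\cap V_{O}$ attracting towards $v$. Let $\sigma$ be the strategy defined on $\mathrm{dom}(\sigma_{Attr})\cup\mathrm{dom}(\sigma_D)$ as $\sigma_{Attr}(w)$ for $w\in\mathrm{dom}(\sigma_{Attr})$ and as $\sigma_D(w)$ for $w\in\mathrm{dom}(\sigma_D)\setminus\mathrm{dom}(\sigma_{Attr})$. Then $\sigma$, on $D\cup A$, is winning for Odd, and plays consistent with it starting in $D\cup A$ only visit priorities greater than or equal to $k$.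
   Context: A parity game $G=(V,E,p,(V_{E},V_{O}))$: finite $V$ partitioned into $V_{E}$ (Even) and $V_{O}$ (Odd), total edge relation $E$, priorities $p:V\to\mathbb{N}$; $\mathrm{post}(v)=\{w:(v,w)\in E\}$, $V_{\ge k}=\{v:p(v)\ge k\}$. Plays are infinite paths; Even wins iff the least priority occurring infinitely often is even. A set $D$ is an Odd-dominion if Odd has a strategy such that every play starting in $D$ consistent with it is won by Odd and stays in $D$; a strategy is closed on $D$ if all consistent plays from $D$ stay in $D$. Guarded attractor: for a priority $k$ and $U\subseteq V_{\ge k}$, $\mathrm{Attr}^{\ge k}_{O}(U)$ is the least set $A$ with $U\subseteq A\subseteq V_{\ge k}$ such that every $u\in V_{O}\cap V_{\ge k}$ with $\mathrm{post}(u)\cap A\ne\emptyset$ is in $A$, and every $u\in V_{E}\cap V_{\ge k}$ with $\mathrm{post}(u)\subseteq A$ is in $A$. Computing $A$ as the limit of the increasing chain $A_0=U$, $A_{j+1}=A_j\cup\{$vertices added by the rules from $A_j\}$, the strategy attracting towards $U$ maps each $u\in (A\setminus U)\cap V_{O}$ first added in $A_{j+1}$ to a successor in $A_j$. *)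

(* A parity game is given by a finite vertex type V, an edge
   relation E : rel V (assumed total), priorities p : V -> nat, and the set
   VE : {set V} of Even's vertices; Odd's vertices are ~: VE. *)
From mathcomp Require Import all_boot.
Set Implicit Arguments. Unset Strict Implicit. Unset Printing Implicit Defensive.

Section ParityGames.
Variable V : finType.
Variable E : rel V.
Variable p : V -> nat.
Variable VE : {set V}.

Definition total_edges := forall v : V, exists w, E v w.

Definition is_play (pi : nat -> V) := forall n, E (pi n) (pi n.+1).

Definition inf_often (pi : nat -> V) (P : V -> Prop) :=
  forall N, exists n, N <= n /\ P (pi n).

Definition odd_wins (pi : nat -> V) :=
  exists m, odd m /\ inf_often pi (fun w => p w = m) /\
    forall j, inf_often pi (fun w => p w = j) -> m <= j.

(* (partial) strategies of Odd: dom(sigma) = {u | sigma u <> None} *)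
Definition odd_strategy (sigma : V -> option V) :=
  forall u w, sigma u = Some w -> u \notin VE /\ E u w.

Definition consistent (sigma : V -> option V) (pi : nat -> V) :=
  forall n w, pi n \notin VE -> sigma (pi n) = Some w -> pi n.+1 = w.

Definition winning_on (sigma : V -> option V) (D : {set V}) :=
  forall pi, is_play pi -> consistent sigma pi -> pi 0 \in D -> odd_wins pi.

Definition closed_on (sigma : V -> option V) (D : {set V}) :=
  forall pi, is_play pi -> consistent sigma pi -> pi 0 \in D ->
    forall n, pi n \in D.

Definition odd_dominion (D : {set V}) :=
  exists sigma, odd_strategy sigma /\ winning_on sigma D /\ closed_on sigma D.

(* guarded attractor Attr^{>= k}_O(U), as the limit of the increasing chain *)
Definition attr_step (k : nat) (A : {set V}) : {set V} :=
  A :|: [set u | (k <= p u) &&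
          (((u \notin VE) && [exists w, E u w && (w \in A)]) ||
           ((u \in VE) && [forall w, E u w ==> (w \in A)]))].

Definition attr_chain (k : nat) (U : {set V}) (j : nat) : {set V} :=
  iter j (attr_step k) U.

Definition attr (k : nat) (U : {set V}) : {set V} := attr_chain k U #|V|.

Definition attracting_strategy (k : nat) (U : {set V}) (sigma : V -> option V) :=
  (forall u, sigma u <> None -> u \in (attr k U :\: U) :&: ~: VE) /\
  (forall j u, u \notin VE -> u \in attr_chain k U j.+1 -> u \notin attr_chain k U j ->
     exists w, sigma u = Some w /\ E u w /\ w \in attr_chain k U j).

Definition combine (s1 s2 : V -> option V) : V -> option V :=
  fun w => match s1 w with Some x => Some x | None => s2 w end.

End ParityGames.

(* Along an Odd-consistent play, D ∪ A is invariant: inside A \ {v} the play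
   strictly descends the attractor chain (every Even move and the σ_Attr move
   of Odd go one level down), and elsewhere it is in D, where σ coincides with
   the closed σ_D.
   Every vertex of D ∪ A other than v has priority ≥ k, and p v = k.  If the
   play meets A infinitely often it meets v infinitely often, so the least
   priority seen infinitely often is the odd k; otherwise it eventually stays
   in D \ A, where it is consistent with σ_D and hence won by Odd. *)
From mathcomp Require Import all_boot.
From Stdlib Require Import Classical.

Set Implicit Arguments.
Unset Strict Implicit.
Unset Printing Implicit Defensive.

Section Plays.
Variables (V : finType) (E : rel V) (p : V -> nat) (VE : {set V}).

Definition follows (sigma : V -> option V) (u w : V) :=
  u \notin VE -> forall w', sigma u = Some w' -> w = w'.

Lemma consistentP sigma pi :
  consistent VE sigma pi <-> forall n, follows sigma (pi n) (pi n.+1).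
Proof. by split=> H n => [? ? ?|? ? ?]; apply: H. Qed.

Lemma follows_combine_l s1 s2 u w :
  s1 u <> None -> follows (combine s1 s2) u w -> follows s1 u w.
Proof. by rewrite /follows /combine; case: (s1 u). Qed.

Lemma follows_combine_r s1 s2 u w :
  s1 u = None -> follows (combine s1 s2) u w -> follows s2 u w.
Proof. by rewrite /follows /combine => ->. Qed.

Lemma closed_on_follows sigma D u w :
  total_edges E -> odd_strategy E VE sigma -> closed_on E VE sigma D ->
  u \in D -> E u w -> follows sigma u w -> w \in D.
Proof.
move=> Htot Hs Hcl Du Euw Hf.
pose next x := if sigma x is Some y then y else xchoose (Htot x).
have E_next x : E x (next x).
  by rewrite /next; case Hx: (sigma x) => [y|]; [case: (Hs _ _ Hx) | exact: xchooseP].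
(* closed_on only speaks of whole plays: complete u -> w into one, using
   totality where sigma is undefined. *)
pose pi n := if n is n'.+1 then iter n' next w else u.
apply: (Hcl pi _ _ Du 1) => [[|n] //=|].
apply/consistentP => -[|n] //= _ y Hy.
by rewrite /next Hy.
Qed.

Lemma inf_often_shift pi N (P : V -> Prop) :
  inf_often (fun i => pi (N + i)) P <-> inf_often pi P.
Proof.
split=> H M.
  have [n [Mn Pn]] := H M.
  by exists (N + n); split => //; apply: leq_trans Mn (leq_addl _ _).
have [n [NMn Pn]] := H (N + M).
exists (n - N); rewrite subnKC; last exact: leq_trans (leq_addr _ _) NMn.
by split=> //; rewrite leq_subRL ?(leq_trans (leq_addr _ _) NMn).
Qed.

Lemma odd_wins_shift pi N : odd_wins p (fun i => pi (N + i)) -> odd_wins p pi.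
Proof.
case=> m [odd_m [inf_m min_m]]; exists m.
split=> //; split=> [|j]; first exact/inf_often_shift.
by move=> inf_j; apply/min_m/(inf_often_shift pi N).
Qed.

Lemma odd_wins_least_odd pi k :
  odd k -> inf_often pi (fun w => p w = k) -> (forall n, k <= p (pi n)) ->
  odd_wins p pi.
Proof.
move=> odd_k inf_k ge_k; exists k; do 2!split=> //.
by move=> j /(_ 0) [n [_ <-]].
Qed.

Lemma winning_on_eventually sigma D pi N :
  winning_on E p VE sigma D -> is_play E pi ->
  (forall n, N <= n -> follows sigma (pi n) (pi n.+1)) -> pi N \in D ->
  odd_wins p pi.
Proof.
move=> Hwin Hpi Hf DN; apply: (@odd_wins_shift _ N).
apply: Hwin => [n||]; rewrite ?addn0 //; first by rewrite addnS.
by apply/consistentP => n; rewrite addnS; apply: Hf; rewrite leq_addr.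
Qed.

Lemma not_inf_often pi (P : V -> Prop) :
  ~ inf_often pi P -> exists N, forall n, N <= n -> ~ P (pi n).
Proof.
move/not_all_ex_not => [N HN]; exists N => n Nn Pn.
by apply: HN; exists n.
Qed.

End Plays.

Section Attractor.
Variables (V : finType) (E : rel V) (p : V -> nat) (VE : {set V}).
Variables (k : nat) (U : {set V}).

Local Notation step := (attr_step E p VE k).
Local Notation chain := (attr_chain E p VE k U).
Local Notation A := (attr E p VE k U).

Lemma attr_step_subset : {homo step : X Y / X \subset Y}.
Proof.
move=> X Y XY; apply/subsetP => u; rewrite !inE => /orP[/(subsetP XY)->//|].
case/andP=> -> /orP[/andP[nVEu /existsP[w /andP[Euw Xw]]]|/andP[VEu /forallP Hw]];
  apply/orP; right; apply/orP; [left | right].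
- by rewrite nVEu; apply/existsP; exists w; rewrite Euw (subsetP XY).
- rewrite VEu; apply/forallP => w.
  by apply/implyP => /(implyP (Hw w)) /(subsetP XY).
Qed.

(* The chain from U is the least-fixpoint iteration of X |-> step (U ∪ X). *)
Let stepU X := step (U :|: X).

Let stepU_subset : {homo stepU : X Y / X \subset Y}.
Proof. by move=> X Y XY; apply/attr_step_subset/setUS. Qed.

Lemma attr_chainE j : chain j = U :|: iter j stepU set0.
Proof.
elim: j => [|j IHj]; first by rewrite setU0.
rewrite /attr_chain iterS -/(attr_chain _ _ _ _ _ j) IHj /=.
by apply/esym/setUidPr; rewrite /stepU subsetU // subsetUl.
Qed.

Lemma attr_chain_sub_attr j : chain j \subset A.
Proof. by rewrite /attr !attr_chainE setUS // (iter_sub_fix stepU_subset). Qed.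

Lemma attr_chain_new j u : u \in chain j.+1 -> u \notin chain j ->
  (k <= p u) && (((u \notin VE) && [exists w, E u w && (w \in chain j)]) ||
                 ((u \in VE) && [forall w, E u w ==> (w \in chain j)])).
Proof. by rewrite /attr_chain iterS /= inE => /orP[->|]; rewrite ?inE. Qed.

Lemma attr_chain_prio j u : u \in chain j -> (u \in U) || (k <= p u).
Proof.
elim: j => [->//|j IHj] Hu.
have [/IHj//|Hn] := boolP (u \in chain j).
by case/andP: (attr_chain_new Hu Hn) => ->; rewrite orbT.
Qed.

Lemma attr_chain_rank j u : u \in chain j -> u \notin U ->
  exists r, u \in chain r.+1 /\ u \notin chain r.
Proof.
elim: j => [->//|j IHj] Hu nUu.
by have [/IHj|Hn] := boolP (u \in chain j); [apply | exists j].
Qed.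

Variable sigmaA : V -> option V.
Hypothesis attracting : attracting_strategy E p VE k U sigmaA.

Lemma attracting_strategy_None u : u \notin A :\: U -> sigmaA u = None.
Proof.
move=> nAu; case Hu: (sigmaA u) => [w|] //.
have : sigmaA u <> None by rewrite Hu.
by move/(attracting.1 u); rewrite inE (negPf nAu).
Qed.

Lemma attracting_descent s r u w : u \in chain r.+1 -> u \notin chain r ->
  E u w -> follows VE (combine sigmaA s) u w -> w \in chain r.
Proof.
move=> Hu Hn Euw Hf; have [VEu|nVEu] := boolP (u \in VE).
  case/andP: (attr_chain_new Hu Hn) => _; rewrite VEu /= => /forallP/(_ w).
  by rewrite Euw.
have [w' [Hw' [_ Cw']]] := attracting.2 r u nVEu Hu Hn.
by rewrite (follows_combine_l _ Hf nVEu Hw') ?Hw'.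
Qed.

Lemma attracting_reach s pi j n : is_play E pi ->
  consistent VE (combine sigmaA s) pi -> pi n \in chain j ->
  exists2 m, n <= m & pi m \in U.
Proof.
move=> Hpi /consistentP Hc; elim: j n => [|j IHj] n Hn; first by exists n.
have [/IHj//|Hnj] := boolP (pi n \in chain j).
have [m nm Um] := IHj _ (attracting_descent Hn Hnj (Hpi n) (Hc n)).
by exists m => //; apply: ltnW.
Qed.

Lemma attr_closed_follows s u w : u \in A -> u \notin U -> E u w ->
  follows VE (combine sigmaA s) u w -> w \in A.
Proof.
move=> Au nUu Euw Hf; have [r [Hr Hnr]] := attr_chain_rank Au nUu.
exact: subsetP (attr_chain_sub_attr r) _ (attracting_descent Hr Hnr Euw Hf).
Qed.

End Attractor.

Lemma combine_attr_invariant (V : finType) (E : rel V) (p : V -> nat)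
    (VE : {set V}) (k : nat) (U D : {set V}) (sigmaA sigmaD : V -> option V) :
  total_edges E -> U \subset D -> attracting_strategy E p VE k U sigmaA ->
  odd_strategy E VE sigmaD -> closed_on E VE sigmaD D ->
  forall pi, is_play E pi -> consistent VE (combine sigmaA sigmaD) pi ->
  pi 0 \in D :|: attr E p VE k U -> forall n, pi n \in D :|: attr E p VE k U.
Proof.
move=> Htot UD HsA HsD HsDcl pi Hpi /consistentP Hc H0; elim=> // n IHn.
have [/setDP[An nUn]|nAUn] := boolP (pi n \in attr E p VE k U :\: U).
  by rewrite inE (attr_closed_follows HsA An nUn (Hpi n) (Hc n)) orbT.
have Dn : pi n \in D.
  case/setUP: IHn => // An; apply: (subsetP UD).
  by apply: contraR nAUn => nUn; apply/setDP.
have follows_D := follows_combine_r (attracting_strategy_None HsA nAUn) (Hc n).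
by rewrite inE (closed_on_follows Htot HsD HsDcl Dn (Hpi n) follows_D).
Qed.

Theorem lemma4 (V : finType) (E : rel V) (p : V -> nat) (VE : {set V})
  (Htot : total_edges E)
  (D : {set V}) (HD : odd_dominion E p VE D)
  (k : nat) (Hk : odd k) (HDk : forall w, w \in D -> k <= p w)
  (v : V) (HvD : v \in D) (Hpv : p v = k)
  (sigmaD : V -> option V) (HsD : odd_strategy E VE sigmaD)
  (HsDwin : winning_on E p VE sigmaD D) (HsDcl : closed_on E VE sigmaD D)
  (sigmaA : V -> option V) (HsA : attracting_strategy E p VE k [set v] sigmaA) :
  let A := attr E p VE k [set v] in
  let sigma := combine sigmaA sigmaD in
  winning_on E p VE sigma (D :|: A) /\
  (forall pi, is_play E pi -> consistent VE sigma pi -> pi 0 \in D :|: A ->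
     forall n, k <= p (pi n)).
Proof.
move=> A sigma.
have vD : [set v] \subset D by rewrite sub1set.
have inv := combine_attr_invariant Htot vD HsA HsD HsDcl.
have prio pi : is_play E pi -> consistent VE sigma pi -> pi 0 \in D :|: A ->
    forall n, k <= p (pi n).
  move=> Hpi Hc H0 n; case/setUP: (inv _ Hpi Hc H0 n) => [/HDk //|].
  by move/attr_chain_prio; rewrite inE => /orP[/eqP->|]; rewrite ?Hpv.
split=> // pi Hpi Hc H0.
have [infA|/not_inf_often [N finA]] := classic (inf_often pi (fun u => u \in A)).
  apply: (odd_wins_least_odd Hk _ (prio _ Hpi Hc H0)) => N.
  have [n [Nn An]] := infA N.
  have [m nm] := attracting_reach (j := #|V|) HsA Hpi Hc An.
  by rewrite inE => /eqP vm; exists m; rewrite vm (leq_trans Nn nm).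
have sigmaA_N n : N <= n -> sigmaA (pi n) = None.
  move=> Nn; have /negP nAn := finA n Nn.
  by apply: (attracting_strategy_None HsA); rewrite inE (negPf nAn) andbF.
apply: (winning_on_eventually (N := N) HsDwin Hpi).
  by move=> n Nn; apply: (follows_combine_r (sigmaA_N n Nn)); move/consistentP: Hc.
by case/setUP: (inv _ Hpi Hc H0 N) => // /(finA N (leqnn N)).
Qed.
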